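(* Let $\Theta$ be a variety of universal algebras and let $H$ be a finitely generated free $\Theta$-algebra. If $H$ is weakly homogeneous, then $H$ is logically perfect.
   Context: $X^0=\{x_1,x_2,\dots\}$ is an infinite set of variables; for finite $X\subset X^0$, $W(X)$ is the free $\Theta$-algebra on $X$; homomorphisms $W(X)\to H$ are called points. For each finite $X$, the set $\Phi(X)$ of formulas of sort $X$ is defined inductively: equalities $w\equiv w'$ ($w,w'\in W(X)$) are in $\Phi(X)$; $\Phi(X)$ is closed under $\neg,\vee,\wedge$ and $\exists x$ for $x\in X$; and for every homomorphism $s:W(X)\to W(Y)$ and $u\in\Phi(X)$, $s_*u\in\Phi(Y)$. Values $Val^X_H(u)\subseteq\mathrm{Hom}(W(X),H)$: $Val^X_H(w\equiv w')=\{\mu:\mu(w)=\mu(w')\}$; $\mu\in Val^X_H(\exists x\,u)$ iff some point $\nu$ agreeing with $\mu$ on $X\setminus\{x\}$ lies in $Val^X_H(u)$; $\vee,\wedge,\neg$ are union, intersection, complement; $\mu\in Val^Y_H(s_*u)$ iff $\mu\circ s\in Val^X_H(u)$. The logical kernel of a point $\mu:W(X)\to H$ is $LKer(\mu)=\{u\in\Phi(X):\mu\in Val^X_H(u)\}$. An algebra $H$ is logically perfect if for every finite $X$ and every two points $\mu,\nu:W(X)\to H$ with $LKer(\mu)=LKer(\nu)$ there is an automorphism $\varphi$ of $H$ with $\mu=\varphi\circ\nu$. An algebra $H$ is weakly homogeneous if for every isomorphism $\varphi:A\to B$ between finitely generated subalgebras $A,B$ of $H$ such that both $\varphi$ and $\varphi^{-1}:B\to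 A$ extend to endomorphisms of $H$, the map $\varphi$ extends to an automorphism of $H$. *)

From mathcomp Require Import all_boot finmap.
Set Implicit Arguments. Unset Strict Implicit. Unset Printing Implicit Defensive.
Open Scope fset_scope.

Record signature := Signature { op : Type; arity : op -> nat }.

Inductive term (S : signature) (V : Type) : Type :=
| tvar : V -> term S V
| tapp : forall o : op S, ('I_(arity o) -> term S V) -> term S V.
Arguments tvar {S V}.
Arguments tapp {S V}.

Record algebra (S : signature) := Algebra {
  carrier :> Type;
  interp : forall o : op S, ('I_(arity o) -> carrier) -> carrier }.
Arguments interp {S}.

Fixpoint eval (S : signature) (A : algebra S) (V : Type) (f : V -> A)
  (t : term S V) : A :=
  match t with
  | tvar v => f v
  | tapp o ts => interp A o (fun i => eval f (ts i))
  end.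

Definition hom (S : signature) (A B : algebra S) (h : A -> B) : Prop :=
  forall (o : op S) (args : 'I_(arity o) -> A),
    h (interp A o args) = interp B o (fun i => h (args i)).

Definition endomorphism (S : signature) (A : algebra S) (h : A -> A) : Prop :=
  hom h.

Definition automorphism (S : signature) (A : algebra S) (h : A -> A) : Prop :=
  hom h /\ bijective h.

(* A variety Theta is given by its set of defining identities
   (pairs of terms in the variables x_0, x_1, ... ) *)
Definition identities (S : signature) := term S nat -> term S nat -> Prop.

Definition in_variety (S : signature) (Th : identities S) (A : algebra S) : Prop :=
  forall l r, Th l r -> forall f : nat -> A, eval f l = eval f r.

Definition fg_free_in (S : signature) (Th : identities S) (H : algebra S) : Prop :=
  in_variety Th H /\
  exists (n : nat) (b : 'I_n -> H),
    forall (K : algebra S), in_variety Th K ->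
    forall f : 'I_n -> K,
      exists h : H -> K,
        [/\ hom h, (forall i, h (b i) = f i) &
            (forall h' : H -> K, hom h' -> (forall i, h' (b i) = f i) ->
               forall x, h' x = h x)].

Definition subalgebra (S : signature) (H : algebra S) (A : H -> Prop) : Prop :=
  forall (o : op S) (args : 'I_(arity o) -> H),
    (forall i, A (args i)) -> A (interp H o args).

Inductive generated (S : signature) (H : algebra S) (G : H -> Prop) : H -> Prop :=
| gen_base x : G x -> generated G x
| gen_op (o : op S) (args : 'I_(arity o) -> H) :
    (forall i, generated G (args i)) -> generated G (interp H o args).

Definition fg_subalgebra (S : signature) (H : algebra S) (A : H -> Prop) : Prop :=
  exists (n : nat) (g : 'I_n -> H),
    forall x, A x <-> generated (fun y => exists i, y = g i) x.

(* phi (a total function on H, only its restriction to A matters) is an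
   isomorphism from the subalgebra A onto the subalgebra B *)
Definition sub_iso (S : signature) (H : algebra S) (A B : H -> Prop)
  (phi : H -> H) : Prop :=
  [/\ (forall a, A a -> B (phi a)),
      (forall b, B b -> exists2 a, A a & phi a = b),
      (forall a a', A a -> A a' -> phi a = phi a' -> a = a') &
      (forall (o : op S) (args : 'I_(arity o) -> H), (forall i, A (args i)) ->
         phi (interp H o args) = interp H o (fun i => phi (args i)))].

Definition weakly_homogeneous (S : signature) (H : algebra S) : Prop :=
  forall (A B : H -> Prop) (phi : H -> H),
    fg_subalgebra A -> fg_subalgebra B -> sub_iso A B phi ->
    (exists psi, endomorphism psi /\ forall a, A a -> psi a = phi a) ->
    (exists chi, endomorphism chi /\ forall a, A a -> chi (phi a) = a) ->
    exists alpha, automorphism alpha /\ forall a, A a -> alpha a = phi a.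

(* Elements of W(X) are represented by terms over X; a homomorphism
   s : W(X) -> W(Y) is given by the images of the free generators (a map
   X -> term Y); a point W(X) -> H is given by its values on the free
   generators (a map X -> H). *)
Inductive formula (S : signature) : {fset nat} -> Type :=
| Feq (X : {fset nat}) : term S X -> term S X -> formula S X
| Fneg (X : {fset nat}) : formula S X -> formula S X
| For (X : {fset nat}) : formula S X -> formula S X -> formula S X
| Fand (X : {fset nat}) : formula S X -> formula S X -> formula S X
| Fex (X : {fset nat}) (x : X) : formula S X -> formula S X
| Fsub (X Y : {fset nat}) (s : X -> term S Y) : formula S X -> formula S Y.

Definition upd (X : {fset nat}) (T : Type) (mu : X -> T) (x : X) (a : T) : X -> T :=
  fun y => if y == x then a else mu y.

Fixpoint sat (S : signature) (H : algebra S) (X : {fset nat})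
  (u : formula S X) : (X -> H) -> Prop :=
  match u in formula _ X return (X -> H) -> Prop with
  | Feq _ w w' => fun mu => eval mu w = eval mu w'
  | Fneg _ u => fun mu => ~ @sat S H _ u mu
  | For _ u v => fun mu => @sat S H _ u mu \/ @sat S H _ v mu
  | Fand _ u v => fun mu => @sat S H _ u mu /\ @sat S H _ v mu
  | Fex _ x u => fun mu => exists a : H, @sat S H _ u (upd mu x a)
  | Fsub _ _ s u => fun mu => @sat S H _ u (fun x => eval mu (s x))
  end.

Definition same_LKer (S : signature) (H : algebra S) (X : {fset nat})
  (mu nu : X -> H) : Prop :=
  forall u : formula S X, sat u mu <-> sat u nu.

Definition logically_perfect (S : signature) (H : algebra S) : Prop :=
  forall (X : {fset nat}) (mu nu : X -> H),
    same_LKer mu nu ->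
    exists phi, automorphism phi /\ forall x : X, mu x = phi (nu x).

From mathcomp Require Import all_boot finmap.
From Stdlib Require Import FunctionalExtensionality ProofIrrelevance IndefiniteDescription.
Set Implicit Arguments. Unset Strict Implicit. Unset Printing Implicit Defensive.
Open Scope fset_scope.

(* A free algebra is generated by its basis b, so each nu x is a word w_x(b).
   The formula "exists y, x = w_x(y) for every x" holds at nu, hence at mu; the
   witnesses define an endomorphism psi with psi (nu x) = mu x, and symmetrically
   chi with chi (mu x) = nu x.  These are mutually inverse on the subalgebras
   generated by nu(X) and mu(X), so weak homogeneity extends psi to an
   automorphism. *)

Section Terms.
Variable S : signature.

Fixpoint tmap (V W : Type) (f : V -> W) (t : term S V) : term S W :=
  match t with
  | tvar v => tvar (f v)
  | tapp o ts => tapp o (fun i => tmap f (ts i))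
  end.

Lemma eval_tmap (A : algebra S) V W (f : V -> W) (p : W -> A) t :
  eval p (tmap f t) = eval (fun v => p (f v)) t.
Proof.
elim: t => //= o ts IH; congr (interp A o).
by apply: functional_extensionality => i; exact: IH.
Qed.

Lemma eq_eval (A : algebra S) V (p q : V -> A) t : p =1 q -> eval p t = eval q t.
Proof. by move=> /functional_extensionality ->. Qed.

Lemma hom_eval (A B : algebra S) (f : A -> B) V (p : V -> A) t :
  hom f -> f (eval p t) = eval (fun v => f (p v)) t.
Proof.
move=> hf; elim: t => //= o ts IH; rewrite hf; congr (interp B o).
by apply: functional_extensionality => i; exact: IH.
Qed.

Lemma hom_comp (A B C : algebra S) (f : A -> B) (g : B -> C) :
  hom f -> hom g -> hom (g \o f).
Proof. by move=> hf hg o args /=; rewrite hf hg. Qed.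

End Terms.

Section Generated.
Variable S : signature.

Lemma generated_hom_image (H K : algebra S) (G : H -> Prop) (G' : K -> Prop)
    (f : H -> K) x :
  hom f -> (forall y, G y -> G' (f y)) -> generated G x -> generated G' (f x).
Proof.
move=> hf hG; elim => [y /hG | o args _ IH]; first exact: gen_base.
by rewrite hf; exact: gen_op.
Qed.

Lemma generated_hom_fixed (H : algebra S) (G : H -> Prop) (f : H -> H) x :
  hom f -> (forall y, G y -> f y = y) -> generated G x -> f x = x.
Proof.
move=> hf hG; elim => [y /hG // | o args _ IH]; rewrite hf; congr (interp H o).
by apply: functional_extensionality => i; exact: IH.
Qed.

Lemma generated_eval (H : algebra S) I (b : I -> H) x :
  generated (fun y => exists i, y = b i) x -> exists w : term S I, eval b w = x.
Proof.
elim => [_ [i ->] | o args _ IH]; first by exists (tvar i).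
have [ws hws] := functional_choice _ IH.
by exists (tapp o ws) => /=; congr (interp H o); apply: functional_extensionality.
Qed.

Lemma fg_subalgebra_range (H : algebra S) (T : finType) (f : T -> H) :
  fg_subalgebra (generated (fun y => exists t, y = f t)).
Proof.
exists #|T|, (fun i => f (enum_val i)) => x.
have hid : hom (id : H -> H) by [].
split; apply: (generated_hom_image hid) => _ [t ->].
  by exists (enum_rank t); rewrite enum_rankK.
by exists (enum_val t).
Qed.

Section GeneratedAlgebra.
Variables (H : algebra S) (G : H -> Prop).

Definition generated_algebra : algebra S :=
  @Algebra S {x : H | generated G x}
    (fun o args => exist _ (interp H o (fun i => sval (args i)))
                          (gen_op (fun i => svalP (args i)))).

Lemma val_eval_generated V (f : V -> generated_algebra) t :
  sval (eval f t) = eval (fun v => sval (f v)) t.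
Proof.
elim: t => //= o ts IH; congr (interp H o).
by apply: functional_extensionality => i; exact: IH.
Qed.

End GeneratedAlgebra.

End Generated.

Definition free_basis (S : signature) (Th : identities S) (H : algebra S) I
    (b : I -> H) : Prop :=
  forall (K : algebra S), in_variety Th K ->
  forall f : I -> K,
    exists h : H -> K,
      [/\ hom h, (forall i, h (b i) = f i) &
          (forall h' : H -> K, hom h' -> (forall i, h' (b i) = f i) ->
             forall x, h' x = h x)].

(* The subalgebra generated by b lies in the variety, so the identity of H
   factors through it by uniqueness of extensions. *)
Lemma free_basis_generates (S : signature) (Th : identities S) (H : algebra S) I
    (b : I -> H) :
  in_variety Th H -> free_basis Th b ->
  forall x, generated (fun y => exists i, y = b i) x.
Proof.
move=> hv hfree x; set G := fun y => exists i, y = b i.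
have hvG : in_variety Th (generated_algebra G).
  move=> l r hlr f; apply: eq_sig_hprop => [y p q|]; first exact: proof_irrelevance.
  by rewrite !val_eval_generated; exact: hv.
have [h [hh hb _]] := hfree _ hvG (fun i => exist _ (b i) (gen_base (ex_intro _ i erefl))).
have [h0 [_ _ huniq]] := hfree _ hv b.
have hval : hom (fun y => sval (h y)) by move=> o args; rewrite hh.
have <- : sval (h x) = x.
  rewrite (huniq _ hval) -?(huniq id) // => i; by rewrite hb.
exact: svalP.
Qed.

Section Formulas.
Variables (S : signature) (H : algebra S) (Z : {fset nat}).

Definition Fexs (l : seq Z) (u : formula S Z) : formula S Z :=
  foldr (fun z v => Fex z v) u l.

Lemma sat_Fexs (l : seq Z) u (p : Z -> H) :
  sat (Fexs l u) p <-> exists q, (forall z, z \notin l -> q z = p z) /\ sat u q.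
Proof.
elim: l p => [|z l IH] p /=.
  split=> [hu | [q [hq hu]]]; first by exists p.
  by have -> : p = q by apply: functional_extensionality => z; rewrite hq.
split=> [[a /IH [q [hq hu]]] | [q [hq hu]]].
  exists q; split=> // z'; rewrite inE negb_or => /andP [ne nl].
  by rewrite hq // /upd (negbTE ne).
exists (q z); apply/IH; exists q; split=> // z' nl.
rewrite /upd; case: eqP => [-> // | /eqP ne].
by apply: hq; rewrite inE negb_or ne.
Qed.

Lemma sat_foldr_Fand (T : eqType) (s : seq T) (E : T -> formula S Z) u (p : Z -> H) :
  sat (foldr (@Fand S Z) u (map E s)) p <-> sat u p /\ forall t, t \in s -> sat (E t) p.
Proof.
elim: s => [|t s IH] /=; first by split=> [|[]].
split=> [[hE /IH [hu hs]] | [hu hs]].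
  by split=> // t'; rewrite inE => /orP [/eqP -> | /hs].
split; first by apply: hs; rewrite inE eqxx.
by apply/IH; split=> // t' ht'; apply: hs; rewrite inE ht' orbT.
Qed.

End Formulas.

(* The sort of the formula extends X by n fresh variables shift + i; x0 is only
   used to send these fresh variables somewhere when substituting back into X. *)
Section ImageFormula.
Variables (S : signature) (n : nat) (X : {fset nat}) (x0 : X) (w : X -> term S 'I_n).

Definition fresh_shift := (\sum_(y <- X) y).+1.

Definition image_sort : {fset nat} :=
  seq_fset tt (X ++ map (addn fresh_shift) (iota 0 n)).

Lemma fresh_shift_gt (x : X) : val x < fresh_shift.
Proof. by rewrite ltnS (big_rem (val x)) //= ?leq_addr // (fsvalP x). Qed.

Lemma old_in_image_sort (x : X) : val x \in image_sort.
Proof. by rewrite seq_fsetE mem_cat (fsvalP x). Qed.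

Lemma fresh_in_image_sort (i : 'I_n) : (fresh_shift + i)%N \in image_sort.
Proof. by rewrite seq_fsetE mem_cat map_f ?orbT // mem_iota /=. Qed.

Definition old (x : X) : image_sort := [` old_in_image_sort x].
Definition fresh (i : 'I_n) : image_sort := [` fresh_in_image_sort i].
Definition fresh_vars : seq image_sort := map fresh (enum 'I_n).
Definition restrict (z : image_sort) : term S X := tvar (insubd x0 (val z)).

Definition image_formula : formula S X :=
  Fsub restrict
    (Fexs fresh_vars
       (foldr (@Fand S _) (Feq (tvar (old x0)) (tvar (old x0)))
          [seq Feq (tvar (old x)) (tmap fresh (w x)) | x <- enum {: X}])).

Lemma old_notin_fresh_vars x : old x \notin fresh_vars.
Proof.
apply/mapP => -[i _ /(congr1 val) /= e].
by have := fresh_shift_gt x; rewrite /= e ltnNge leq_addr.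
Qed.

Lemma sat_image_formula (H : algebra S) (mu : X -> H) :
  sat image_formula mu <-> exists c : 'I_n -> H, forall x, mu x = eval c (w x).
Proof.
rewrite /= sat_Fexs; split=> [[q [hq /sat_foldr_Fand [_ hw]]] | [c hc]].
  exists (fun i => q (fresh i)) => x.
  move: (hw x (mem_enum _ x)); rewrite /= eval_tmap => <-.
  by rewrite hq ?old_notin_fresh_vars //= valKd.
pose q z := if z \in fresh_vars then oapp c (eval mu (restrict z)) (insub (val z - fresh_shift))
            else eval mu (restrict z).
have q_fresh i : q (fresh i) = c i.
  rewrite /q map_f ?mem_enum //= addKn; case: insubP => [j _ ji | ]; last by rewrite ltn_ord.
  by congr c; apply: val_inj.
exists q; split=> [z /negbTE nz | ]; first by rewrite /q nz.
apply/sat_foldr_Fand; split=> // x _; rewrite /= eval_tmap.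
rewrite /q (negbTE (old_notin_fresh_vars x)) /= valKd hc.
by apply: eq_eval => i; exact: esym (q_fresh i).
Qed.

End ImageFormula.

Lemma same_LKer_endomorphism (S : signature) (Th : identities S) (H : algebra S)
    n (b : 'I_n -> H) (X : {fset nat}) (x0 : X) (mu nu : X -> H) :
  in_variety Th H -> free_basis Th b -> same_LKer mu nu ->
  exists psi, hom psi /\ forall x, psi (nu x) = mu x.
Proof.
move=> hv hfree hL.
have [w hw] : exists w : X -> term S 'I_n, forall x, eval b (w x) = nu x.
  apply: (functional_choice (fun x w => eval b w = nu x)) => x.
  exact/generated_eval/(free_basis_generates hv hfree).
have /hL /sat_image_formula [c hc] : sat (image_formula x0 w) nu.
  by apply/sat_image_formula; exists b => x; rewrite hw.
have [psi [hpsi psi_b _]] := hfree _ hv c.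
exists psi; split=> // x.
by rewrite -hw hom_eval // hc; apply: eq_eval.
Qed.

Lemma sub_iso_inverse (S : signature) (H : algebra S) (A B : H -> Prop)
    (psi chi : H -> H) :
  hom psi -> (forall a, A a -> B (psi a)) -> (forall b, B b -> A (chi b)) ->
  (forall a, A a -> chi (psi a) = a) -> (forall b, B b -> psi (chi b) = b) ->
  sub_iso A B psi.
Proof.
move=> hpsi AB BA chi_psi psi_chi; split=> //.
- by move=> b hb; exists (chi b); [exact: BA | exact: psi_chi].
- by move=> a a' ha ha' e; rewrite -(chi_psi a ha) -(chi_psi a' ha') e.
Qed.

Theorem mainTheorem2 (S : signature) (Th : identities S) (H : algebra S) :
  fg_free_in Th H -> weakly_homogeneous H -> logically_perfect H.
Proof.
move=> [hv [n [b hfree]]] hwh X mu nu hL.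
case: (pickP (fun _ : X => true)) => [x0 _ | X0]; last first.
  by exists id; split=> [|x]; [split=> //; exists id | have := X0 x].
have [psi [hpsi psi_nu]] := same_LKer_endomorphism x0 hv hfree hL.
have [chi [hchi chi_mu]] :=
  same_LKer_endomorphism x0 hv hfree (fun u => iff_sym (hL u)).
pose A := generated (fun y => exists x, y = nu x).
pose B := generated (fun y => exists x, y = mu x).
have AB a : A a -> B (psi a).
  by apply: generated_hom_image => // _ [x ->]; exists x.
have BA a : B a -> A (chi a).
  by apply: generated_hom_image => // _ [x ->]; exists x.
have chi_psi a : A a -> chi (psi a) = a.
  by apply: (generated_hom_fixed (hom_comp hpsi hchi)) => _ [x ->] /=; rewrite psi_nu.
have psi_chi a : B a -> psi (chi a) = a.
  by apply: (generated_hom_fixed (hom_comp hchi hpsi)) => _ [x ->] /=; rewrite chi_mu.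
have [alpha [halpha alpha_psi]] :=
  hwh A B psi (fg_subalgebra_range nu) (fg_subalgebra_range mu)
    (sub_iso_inverse hpsi AB BA chi_psi psi_chi)
    (ex_intro _ psi (conj hpsi (fun _ _ => erefl))) (ex_intro _ chi (conj hchi chi_psi)).
exists alpha; split=> // x.
by rewrite alpha_psi ?psi_nu //; apply: gen_base; exists x.
Qed.
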